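(* Let $X$ be a closed manifold, $\{g_t\}_{0\le t\le 1}$ an isotopy of homeomorphisms from $g_0=\mathrm{id}_X$ to $g=g_1$, with isotopy class $\widetilde g$ relative to endpoints, and let $\varphi\colon X\to S^1$ be continuous. Let $a=[\alpha_\varphi]\in\mathrm{H}^1(X;\mathbb{R})$ (with $A$ the discrete group $\mathbb{R}$), let $\{\widehat g_t\}$ be the lift of $\{g_t\}$ to bundle automorphisms of $\widehat X_a$ with $\widehat g_0=\mathrm{id}$, and set $\widehat g=\widehat g_1$. Then for $x\in X$ and a $g$-invariant Borel probability measure $\mu$ on $X$, $h_{x,\widetilde g}([\varphi])=\widehat{\mathrm{rot}}_{x,\alpha_\varphi}(\widehat g)$ and $h_{\mu,\widetilde g}([\varphi])=\widehat{\mathrm{rot}}_{\mu,\alpha_\varphi}(\widehat g)$.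
   Context: For a continuous $\varphi\colon X\to S^1=\mathbb{R}/\mathbb{Z}$ and a path $\gamma\colon[0,1]\to X$, let $\varphi_\gamma\colon[0,1]\to\mathbb{R}$ be a continuous lift of $t\mapsto\varphi(\gamma(t))$ and $\Delta_\varphi(\gamma)=\varphi_\gamma(1)-\varphi_\gamma(0)$; $\alpha_\varphi$ is the real singular $1$-cocycle on $X$ given by $\alpha_\varphi(\gamma)=\Delta_\varphi(\gamma)$. The homological translation vector is $h_{x,\widetilde g}([\varphi])=\lim_{n\to\infty}\frac1n\Delta_\varphi(\{g_t(x)\}*\{g_t(g(x))\}*\cdots*\{g_t(g^{n-1}(x))\})$ (concatenation of paths), when the limit exists, and the mean version is $h_{\mu,\widetilde g}([\varphi])=\int_X\Delta_\varphi(\{g_t(x)\}_{t})\,d\mu(x)$. For $a\in\mathrm{H}^1(X;\mathbb{R})$, $\pi\colon\widehat X_a\to X$ is the principal bundle with discrete fiber $\mathbb{R}$ whose holonomy is $a$, $T_r$ the action of $r\in\mathbb{R}$, and bundle automorphisms are homeomorphisms of $\widehat X_a$ covering homeomorphisms of $X$. For a real $1$-cocycle $\alpha$ representing $a$, let $\theta\colon\widehat X_a\to\mathbb{R}$ satisfy $d\theta=\pi^*\alpha$ and $\theta(T_r\widehat y)=\theta(\widehat y)+r$; $\rho_{x,\alpha}(\widehat g)=\theta(\widehat g(\widehat x))-\theta(\widehat x)$ for $\widehat x\in\pi^{-1}(x)$; $\widehat{\mathrm{rot}}_{x,\alpha}(\widehat g)=\lim_n\rho_{x,\alpha}(\widehat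 g^n)/n$ and $\widehat{\mathrm{rot}}_{\mu,\alpha}(\widehat g)=\int_X\rho_{x,\alpha}(\widehat g)\,d\mu(x)$. *)

From HB Require Import structures.
From mathcomp Require Import all_boot all_order all_algebra.
From mathcomp Require Import all_classical all_reals all_analysis.
Set Implicit Arguments. Unset Strict Implicit. Unset Printing Implicit Defensive.
Import Order.TTheory GRing.Theory Num.Theory.
Import numFieldNormedType.Exports.
Local Open Scope classical_set_scope.
Local Open Scope ring_scope.

Section Defs.
Variable R : realType.

Definition I01 : set R := [set t | 0 <= t <= 1].

(** a path in a space: a map R -> X continuous on [0,1] (only its values on [0,1] matter) *)
Definition is_path (X : topologicalType) (gam : R -> X) := {within I01, continuous gam}.

(** S^1 = R/Z, realised as the unit circle in R^2 via t mod 1 |-> (cos 2 pi t, sin 2 pi t) *)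
Definition circle_valued (X : topologicalType) (phi : X -> R * R) :=
  continuous phi /\ forall x, (phi x).1 ^+ 2 + (phi x).2 ^+ 2 = 1.

Definition circ_lift (X : topologicalType) (phi : X -> R * R) (gam : R -> X) (L : R -> R) :=
  {within I01, continuous L} /\
  forall t, I01 t -> phi (gam t) = (cos (2 * pi * L t), sin (2 * pi * L t)).

(** Delta_phi(gam) = phi_gam(1) - phi_gam(0) (independent of the lift) *)
Definition Delta (X : topologicalType) (phi : X -> R * R) (gam : R -> X) : R :=
  xget 0 [set r | exists L, circ_lift phi gam L /\ r = L 1 - L 0].

Definition pcat (X : topologicalType) (g1 g2 : R -> X) : R -> X :=
  fun s => if s <= 2^-1 then g1 (2 * s) else g2 (2 * s - 1).

(** pcatn n f = f 0 * f 1 * ... * f n  (n+1 paths) *)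
Fixpoint pcatn (X : topologicalType) (n : nat) (f : nat -> R -> X) : R -> X :=
  match n with
  | 0 => f 0%N
  | m.+1 => pcat (pcatn m f) (f n)
  end.

Definition homeo (X : topologicalType) (f : X -> X) :=
  continuous f /\ exists h : X -> X, continuous h /\ cancel f h /\ cancel h f.

Definition locally_euclidean (X : topologicalType) (n : nat) :=
  forall x : X, exists (U : set X) (f : X -> 'rV[R]_n) (h : 'rV[R]_n -> X),
    [/\ open U, U x, {within U, continuous f}, open (f @` U) &
     [/\ {within f @` U, continuous h}, forall u, U u -> h (f u) = u &
         forall v, (f @` U) v -> f (h v) = v]].

Definition closed_manifold (X : topologicalType) :=
  [/\ hausdorff_space X, compact [set: X] & exists n, locally_euclidean X n].

Definition isotopy_from_id (X : topologicalType) (G : R -> X -> X) :=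
  [/\ {within [set p : R * X | I01 p.1], continuous (fun p : R * X => G p.1 p.2)},
      forall t, I01 t -> homeo (G t) &
      forall x, G 0 x = x].

(** pi : Xh -> X is a principal bundle with discrete structure group/fiber R
    acting by T (locally trivial: Xh|_U ~ U x R_discrete via a local section) *)
Definition principal_R_bundle (X Xh : topologicalType) (pi : Xh -> X) (T : R -> Xh -> Xh) :=
  [/\ continuous pi, forall r, continuous (T r),
      forall y, T 0 y = y,
      forall r s y, T (r + s) y = T r (T s y) &
    [/\ forall r y, pi (T r y) = pi y &
      forall x, exists (U : set X) (s : X -> Xh),
        [/\ open U, U x, {within U, continuous s},
            forall u, U u -> pi (s u) = u &
          [/\ forall y, U (pi y) -> exists! r, y = T r (s (pi y)) &
              forall y r, U (pi y) -> y = T r (s (pi y)) ->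
                exists V : set Xh, [/\ open V, V y &
                  forall y', V y' -> U (pi y') -> y' = T r (s (pi y'))]]]]].

(** the holonomy of the bundle is a = [alpha_phi]: lifting a loop gam translates
    by alpha_phi(gam) = Delta_phi(gam) *)
Definition holonomy_is_alpha (X Xh : topologicalType) (pi : Xh -> X) (T : R -> Xh -> Xh)
    (phi : X -> R * R) :=
  forall (gam : R -> X) (gh : R -> Xh), is_path gam -> gam 0 = gam 1 ->
    is_path gh -> (forall t, I01 t -> pi (gh t) = gam t) ->
    gh 1 = T (Delta phi gam) (gh 0).

(** theta : Xh -> R with d theta = pi^* alpha_phi and theta (T_r y) = theta y + r *)
Definition theta_for (X Xh : topologicalType) (pi : Xh -> X) (T : R -> Xh -> Xh)
    (phi : X -> R * R) (theta : Xh -> R) :=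
  (forall r y, theta (T r y) = theta y + r) /\
  (forall gh : R -> Xh, is_path gh -> theta (gh 1) - theta (gh 0) = Delta phi (pi \o gh)).

Definition bundle_lift (X Xh : topologicalType) (pi : Xh -> X) (T : R -> Xh -> Xh)
    (G : R -> X -> X) (Gh : R -> Xh -> Xh) :=
  [/\ {within [set p : R * Xh | I01 p.1], continuous (fun p : R * Xh => Gh p.1 p.2)},
      forall t, I01 t -> homeo (Gh t),
      forall t r y, I01 t -> Gh t (T r y) = T r (Gh t y),
      forall t y, I01 t -> pi (Gh t y) = G t (pi y) &
      forall y, Gh 0 y = y].

Definition rho (X Xh : topologicalType) (pi : Xh -> X) (theta : Xh -> R)
    (gh : Xh -> Xh) (x : X) : R :=
  xget 0 [set r | exists y, pi y = x /\ r = theta (gh y) - theta y].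

Definition hseq (X : topologicalType) (phi : X -> R * R) (G : R -> X -> X) (x : X) (n : nat) : R :=
  Delta phi (pcatn n.-1 (fun k t => G t (iter k (G 1) x))) / n%:R.

Definition rotseq (X Xh : topologicalType) (pi : Xh -> X) (theta : Xh -> R)
    (gh : Xh -> Xh) (x : X) (n : nat) : R :=
  rho pi theta (iter n gh) x / n%:R.

End Defs.

Definition borel (X : ptopologicalType) : measurableType _ := g_sigma_algebraType (@open X).

From HB Require Import structures.
From mathcomp Require Import all_boot all_order all_algebra.
From mathcomp Require Import all_classical all_reals all_analysis.
Import Order.TTheory GRing.Theory Num.Theory.
Import numFieldNormedType.Exports.
Local Open Scope classical_set_scope.
Local Open Scope ring_scope.

(* Lifting the concatenated orbit path {g_t (g^j x)}, j < n, through the bundle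
   automorphisms ĝ_t gives the path {ĝ_t (ĝ^j x̂)}, j < n, which runs from x̂
   to ĝ^n x̂.  Since dθ = π^*α_φ, the increment θ(ĝ^n x̂) - θ(x̂) = ρ_x(ĝ^n)
   equals Δ_φ of the projected path, i.e. n times the n-th term of the
   sequence defining h_{x,g̃}.  The two sequences thus coincide term by term,
   and for n = 1 the integrands of the mean versions agree pointwise. *)

Lemma continuous_within_comp (T U W : topologicalType) (A : set T) (B : set U)
    (f : T -> U) (g : U -> W) :
  (forall x, A x -> B (f x)) -> {within A, continuous f} ->
  {within B, continuous g} -> {within A, continuous (g \o f)}.
Proof.
move=> fAB /continuousP cf /continuousP cg; apply/continuousP => O oO.
case/open_subspaceP: (cg O oO) => V oV VB.
case/open_subspaceP: (cf V oV) => V' oV' V'A.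
apply/open_subspaceP; exists V' => //; rewrite V'A.
apply/seteqP; split => x [fx Ax]; split => //=.
- have : (V `&` B) (f x) by split => //; exact: fAB.
  by rewrite VB => -[].
- have : (g @^-1` O `&` B) (f x) by split => //; exact: fAB.
  by rewrite -VB => -[].
Qed.

Section paths.
Variable R : realType.
Implicit Types (t : R) (X : topologicalType).

Lemma I01_1 : @I01 R 1.
Proof. by rewrite /I01 /= ler01 lexx. Qed.

Lemma I01_double t : I01 t -> t <= 2^-1 -> I01 (2 * t).
Proof.
rewrite /I01 /= => /andP[t0 _] th.
by rewrite mulr_ge0 //= -(@ler_pM2r _ 2^-1) // mul1r mulrAC mulfV ?mul1r.
Qed.

Lemma I01_double_sub1 t : I01 t -> 2^-1 <= t -> I01 (2 * t - 1).
Proof.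
rewrite /I01 /= => /andP[_ t1] th; apply/andP; split.
  by rewrite subr_ge0 -(@ler_pM2r _ 2^-1) // mul1r mulrAC mulfV ?mul1r.
by rewrite lerBlDr -(@ler_pM2r _ 2^-1) // mulrAC mulfV ?mul1r // -(natrD _ 1 1) mulfV.
Qed.

Lemma continuous_affine (a b : R) : continuous (fun t : R => a * t - b).
Proof.
by move=> t; apply: cvgB; [apply: cvgM; [exact: cvg_cst | exact: cvg_id] | exact: cvg_cst].
Qed.

Lemma I01_split : @I01 R = `[0, 2^-1] `|` `[2^-1, 1].
Proof.
apply/seteqP; split => t /=; rewrite /I01 /= !in_itv /=.
  by case/andP=> t0 t1; case: (leP t 2^-1) => h; [left | right]; rewrite ?t0 ?t1 ?h // ltW.
case=> /andP[h1 h2]; apply/andP; split => //; last exact: le_trans h1.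
by apply: le_trans h2 _; rewrite invf_le1 // ler1n.
Qed.

Lemma is_path_pcat X (g1 g2 : R -> X) :
  is_path g1 -> is_path g2 -> g1 1 = g2 0 -> is_path (pcat g1 g2).
Proof.
move=> c1 c2 g12; rewrite /is_path I01_split.
apply: withinU_continuous; [exact: itv_closed | exact: itv_closed | |].
- apply: (@subspace_eq_continuous _ _ _ (g1 \o (fun t => 2 * t - 0))).
    by move=> t /set_mem; rewrite /= in_itv /= /from_subspace /pcat subr0 => /andP[_ ->].
  apply: continuous_within_comp c1; last exact/continuous_subspaceT/continuous_affine.
  move=> t; rewrite /= in_itv /= subr0 => /andP[t0 th].
  by apply: (I01_double _ _ th); rewrite /I01 /= t0 (le_trans th) // invf_le1 // ler1n.
- apply: (@subspace_eq_continuous _ _ _ (g2 \o (fun t => 2 * t - 1))).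
    move=> t /set_mem; rewrite /= in_itv /= /from_subspace /pcat => /andP[th _].
    case: ifP => // tle.
    have -> : t = 2^-1 by apply/eqP; rewrite eq_le tle th.
    by rewrite mulfV // subrr.
  apply: continuous_within_comp c2; last exact/continuous_subspaceT/continuous_affine.
  move=> t; rewrite /= in_itv /= => /andP[th t1].
  by apply: (I01_double_sub1 _ _ th); rewrite /I01 /= t1 andbT (le_trans _ th).
Qed.

Lemma pcatn_at0 X m (f : nat -> R -> X) : pcatn m f 0 = f 0%N 0.
Proof. by elim: m => //= m IH; rewrite /pcat ifT ?mulr0. Qed.

Lemma pcatn_at1 X m (f : nat -> R -> X) : pcatn m f 1 = f m 1.
Proof.
case: m => //= m; rewrite /pcat ifF; first by rewrite mulr1 -[2]/(1 + 1) addrK.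
by apply/negbTE; rewrite -ltNge invf_lt1 // ltr1n.
Qed.

Lemma is_path_pcatn X m (f : nat -> R -> X) :
  (forall j, is_path (f j)) -> (forall j, f j 1 = f j.+1 0) -> is_path (pcatn m f).
Proof.
move=> pf ef; elim: m => //= m IH.
by apply: is_path_pcat => //; rewrite pcatn_at1.
Qed.

Lemma pcatn_map X (Y : topologicalType) (h : X -> Y) m (f : nat -> R -> X) (g : nat -> R -> Y) :
  (forall j t, I01 t -> h (f j t) = g j t) ->
  forall t, I01 t -> h (pcatn m f t) = pcatn m g t.
Proof.
move=> fg; elim: m => /= [|m IH] t It; first exact: fg.
rewrite /pcat; case: ifP => th; first exact/IH/I01_double.
by apply/fg/I01_double_sub1 => //; rewrite ltW // ltNge th.
Qed.

Lemma eq_Delta X (phi : X -> R * R) (f g : R -> X) :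
  (forall t, I01 t -> f t = g t) -> Delta phi f = Delta phi g.
Proof.
move=> fg; rewrite /Delta; congr xget; apply/seteqP.
split => r [L [[cL HL] ->]]; exists L; split => //; split => // t It.
  by rewrite -HL // fg.
by rewrite (fg t It) HL.
Qed.

End paths.

Lemma principal_R_bundle_surj (R : realType) (X Xh : topologicalType)
    (pi : Xh -> X) (T : R -> Xh -> Xh) :
  principal_R_bundle pi T -> forall x, exists y, pi y = x.
Proof.
case=> _ _ _ _ [_ loc] x; have [U [s [_ Ux _ pis _]]] := loc x.
by exists (s x); exact: pis.
Qed.

Section bundle_lift.
Context {R : realType} {X Xh : topologicalType}.
Context {G : R -> X -> X} {phi : X -> R * R}.
Context { pi : Xh -> X } {T : R -> Xh -> Xh} {theta : Xh -> R} {Gh : R -> Xh -> Xh}.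
Hypothesis theta_phi : theta_for pi T phi theta.
Hypothesis lift : bundle_lift pi T G Gh.

Lemma is_path_lift_orbit y : is_path (fun t => Gh t y).
Proof.
case: lift => cGh _ _ _ _.
apply: (@continuous_within_comp _ _ _ _ [set p : R * Xh | I01 p.1]
  (fun t => (t, y)) (fun p => Gh p.1 p.2)) => //.
apply: continuous_subspaceT => t.
by apply: (@cvg_pair _ _ _ (nbhs t) (nbhs t) (nbhs y)); [exact: cvg_id | exact: cvg_cst].
Qed.

Lemma pi_iter_lift j y : pi (iter j (Gh 1) y) = iter j (G 1) (pi y).
Proof. by case: lift => _ _ _ piGh _; elim: j => //= j IH; rewrite piGh ?IH //; exact: I01_1. Qed.

Lemma theta_iter_lift k y :
  theta (iter k.+1 (Gh 1) y) - theta y =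
  Delta phi (pcatn k (fun j t => G t (iter j (G 1) (pi y)))).
Proof.
case: lift => _ _ _ piGh Gh0; case: theta_phi => _ dtheta.
pose orbit := pcatn k (fun j t => Gh t (iter j (Gh 1) y)).
have path_orbit : is_path orbit.
  by apply: is_path_pcatn => j; [exact: is_path_lift_orbit | rewrite Gh0].
have := dtheta orbit path_orbit; rewrite /orbit pcatn_at1 pcatn_at0 Gh0 => ->.
apply: eq_Delta => t It; apply: pcatn_map => // j s Is.
by rewrite piGh // pi_iter_lift.
Qed.

Hypothesis pi_surj : forall x, exists y, pi y = x.

Lemma rho_iter_lift k x :
  rho pi theta (iter k.+1 (Gh 1)) x =
  Delta phi (pcatn k (fun j t => G t (iter j (G 1) x))).
Proof.
have [y pyx] := pi_surj x.
apply: xget_unique; first by exists y; rewrite theta_iter_lift pyx.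
by move=> r [y' [<- ->]]; rewrite theta_iter_lift.
Qed.

Lemma rotseq_hseq x : rotseq pi theta (Gh 1) x = hseq phi G x.
Proof.
by apply: funext => -[|n]; rewrite /rotseq /hseq ?invr0 ?mulr0 // rho_iter_lift.
Qed.

End bundle_lift.

Theorem proposition2p18 (R : realType) (X : ptopologicalType) (Xh : topologicalType)
  (G : R -> X -> X) (phi : X -> R * R)
  (pi : Xh -> X) (T : R -> Xh -> Xh) (theta : Xh -> R) (Gh : R -> Xh -> Xh) :
  closed_manifold R X ->
  isotopy_from_id G ->
  circle_valued phi ->
  principal_R_bundle pi T ->
  holonomy_is_alpha pi T phi ->
  theta_for pi T phi theta ->
  bundle_lift pi T G Gh ->
  (forall (x : X) (l : R),
      hseq phi G x n @[n --> \oo] --> l <->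
      rotseq pi theta (Gh 1) x n @[n --> \oo] --> l) /\
  (forall mu : probability (borel X) R,
      (forall A : set (borel X), measurable A -> mu (G 1 @^-1` A) = mu A) ->
      (\int[mu]_x (Delta phi (fun t => G t x))%:E =
       \int[mu]_x (rho pi theta (Gh 1) x)%:E)%E).
Proof.
(* θ already encodes the holonomy. *)
move=> _ _ _ /principal_R_bundle_surj pi_surj _ theta_phi lift.
split=> [x l | mu _]; first by rewrite (rotseq_hseq theta_phi lift pi_surj).
apply: eq_integral => x _; congr (_%:E).
by rewrite (rho_iter_lift theta_phi lift pi_surj 0).
Qed.
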